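(* Let $n\geq1$. If $\beta\in B_{2n}$ and the underlying permutation of $\beta$ consists of a single cycle (of length $2n$), then $\beta$ does not have positive Burau eigenvalues, i.e. it is not the case that all eigenvalues of $\rho(\beta)$ lie in $\mathbb{E}$ and are positive.
   Context: $B_N$ is the braid group generated by $\sigma_1,\dots,\sigma_{N-1}$, with underlying permutation homomorphism $B_N\to S_N$, $\sigma_i\mapsto(i\ i{+}1)$. The reduced Burau representation $\rho:B_N\to\mathrm{GL}_{N-1}(\mathbb{Z}[t^{\pm1}])$ is the homomorphism given for $N\ge3$ by $\rho(\sigma_1)=\begin{pmatrix}-t&0&0\\1&1&0\\0&0&I_{N-3}\end{pmatrix}$, $\rho(\sigma_{N-1})=\begin{pmatrix}I_{N-3}&0&0\\0&1&t\\0&0&-t\end{pmatrix}$, $\rho(\sigma_i)=\begin{pmatrix}I_{i-2}&0&0&0&0\\0&1&t&0&0\\0&0&-t&0&0\\0&0&1&1&0\\0&0&0&0&I_{N-i-2}\end{pmatrix}$ for $2\le i\le N-2$, and for $N=2$ by $\rho(\sigma_1)=(-t)$. $\mathbb{E}=\bigcup_{k\ge1}\mathbb{R}((t^{1/k}))$ is the field of Puiseux series over $\mathbb{R}$, with the ordering whose positive elements are the nonzero series whose lowest-exponent nonzero coefficient is positive. *)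

From HB Require Import structures.
From mathcomp Require Import all_boot all_order all_algebra all_fingroup.
From mathcomp Require Import boolp reals zify.
Set Implicit Arguments. Unset Strict Implicit. Unset Printing Implicit Defensive.
Import Order.TTheory GRing.Theory Num.Theory.
Local Open Scope ring_scope.

Section PowerSeries.
Variable R : idomainType.

(* Formal power series R[[u]] over an integral domain R, represented by their
   coefficient sequences; equality is (classical) extensional equality. *)
Variant pseries := PSeries of nat -> R.
Definition pcoef (f : pseries) : nat -> R := let: PSeries c := f in c.

HB.instance Definition _ := gen_eqMixin pseries.
HB.instance Definition _ := gen_choiceMixin pseries.

Lemma pseriesP (f g : pseries) : (forall n, pcoef f n = pcoef g n) -> f = g.
Proof. by case: f; case: g => a b /= H; congr PSeries; apply/funext. Qed.

Definition ps_zero := PSeries (fun _ => 0).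
Definition ps_opp f := PSeries (fun n => - pcoef f n).
Definition ps_add f g := PSeries (fun n => pcoef f n + pcoef g n).

Lemma ps_addA : associative ps_add.
Proof. by move=> f g h; apply: pseriesP => n /=; rewrite addrA. Qed.
Lemma ps_addC : commutative ps_add.
Proof. by move=> f g; apply: pseriesP => n /=; rewrite addrC. Qed.
Lemma ps_add0 : left_id ps_zero ps_add.
Proof. by move=> f; apply: pseriesP => n /=; rewrite add0r. Qed.
Lemma ps_addN : left_inverse ps_zero ps_opp ps_add.
Proof. by move=> f; apply: pseriesP => n /=; rewrite addNr. Qed.

HB.instance Definition _ := GRing.isZmodule.Build pseries ps_addA ps_addC ps_add0 ps_addN.

Definition ps_trunc n f : {poly R} := \poly_(i < n.+1) pcoef f i.

Definition ps_one := PSeries (fun n => (n == 0%N)%:R).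
Definition ps_mul f g := PSeries (fun n => (ps_trunc n f * ps_trunc n g)`_n).

Lemma ps_mulE f g n :
  pcoef (ps_mul f g) n = \sum_(i < n.+1) pcoef f i * pcoef g (n - i).
Proof.
rewrite /= coefM; apply: eq_bigr => i _.
by rewrite !coef_poly ltn_ord ltnS leq_subr.
Qed.

Lemma coef_mul_agree (p q : {poly R}) f g n m :
  (forall i, (i <= n)%N -> p`_i = pcoef f i) ->
  (forall i, (i <= n)%N -> q`_i = pcoef g i) ->
  (m <= n)%N -> (p * q)`_m = pcoef (ps_mul f g) m.
Proof.
move=> Hp Hq Hm; rewrite ps_mulE coefM; apply: eq_bigr => i _.
have Hi : (i <= n)%N by apply: leq_trans Hm; rewrite -ltnS.
by rewrite Hp // Hq // (leq_trans (leq_subr _ _) Hm).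
Qed.

Lemma ps_trunc_coef n f i : (i <= n)%N -> (ps_trunc n f)`_i = pcoef f i.
Proof. by move=> Hi; rewrite coef_poly ltnS Hi. Qed.

Lemma ps_mulA : associative ps_mul.
Proof.
move=> f g h; apply: pseriesP => n.
have E1 : pcoef (ps_mul (ps_mul f g) h) n =
          ((ps_trunc n f * ps_trunc n g) * ps_trunc n h)`_n.
  symmetry; apply: (@coef_mul_agree _ _ (ps_mul f g) h n n) => //.
  - move=> i Hi; apply: (coef_mul_agree (n:=n)) => //;
      by move=> j Hj; apply: ps_trunc_coef.
  - by move=> i Hi; apply: ps_trunc_coef.
have E2 : pcoef (ps_mul f (ps_mul g h)) n =
          (ps_trunc n f * (ps_trunc n g * ps_trunc n h))`_n.
  symmetry; apply: (@coef_mul_agree _ _ f (ps_mul g h) n n) => //.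
  - by move=> i Hi; apply: ps_trunc_coef.
  - move=> i Hi; apply: (coef_mul_agree (n:=n)) => //;
      by move=> j Hj; apply: ps_trunc_coef.
by rewrite E1 E2 mulrA.
Qed.

Lemma ps_mulC : commutative ps_mul.
Proof. by move=> f g; apply: pseriesP => n /=; rewrite mulrC. Qed.

Lemma ps_mul1 : left_id ps_one ps_mul.
Proof.
move=> f; apply: pseriesP => n; rewrite ps_mulE big_ord_recl /= mul1r subn0.
by rewrite big1 ?addr0 // => i _; rewrite mul0r.
Qed.

Lemma ps_mulDl : left_distributive ps_mul ps_add.
Proof.
move=> f g h; apply: pseriesP => n.
change (pcoef (ps_mul (ps_add f g) h) n = pcoef (ps_mul f h) n + pcoef (ps_mul g h) n).
rewrite !ps_mulE -big_split /=.
by apply: eq_bigr => i _; rewrite mulrDl.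
Qed.

Lemma ps_one_neq0 : ps_one != ps_zero.
Proof.
apply/eqP => /(congr1 (fun f => pcoef f 0)) /= /eqP.
by rewrite oner_eq0.
Qed.

HB.instance Definition _ :=
  GRing.Zmodule_isComNzRing.Build pseries ps_mulA ps_mulC ps_mul1 ps_mulDl ps_one_neq0.

Definition ps_unit : {pred pseries} := fun x => `[< exists y, y * x = 1 >].
Definition ps_inv (x : pseries) : pseries :=
  match pselect (exists y, y * x = 1) with
  | left H => projT1 (cid H)
  | right _ => x
  end.

Lemma ps_mulVx : {in ps_unit, left_inverse 1 ps_inv *%R}.
Proof.
move=> x Hx; have {Hx} Hx : exists y, y * x = 1 by apply/asboolP.
rewrite /ps_inv.
case: pselect => [H|//]; by case: cid.
Qed.
Lemma ps_unitPl : forall x y : pseries, y * x = 1 -> ps_unit x.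
Proof. by move=> x y H; apply/asboolP; exists y. Qed.
Lemma ps_invr_out : {in [predC ps_unit], ps_inv =1 id}.
Proof.
move=> x Hx; have {Hx} Hn : ~ exists y, y * x = 1.
  by move=> H; move/negP: Hx; apply; apply/asboolP.
rewrite /ps_inv.
by case: pselect.
Qed.

HB.instance Definition _ :=
  GRing.ComNzRing_hasMulInverse.Build pseries ps_mulVx ps_unitPl ps_invr_out.

Lemma ps_coef_eq0 (f : pseries) : (forall n, pcoef f n = 0) -> f = 0.
Proof. by move=> H; apply: pseriesP => n; rewrite H. Qed.

Lemma ps_integral : GRing.integral_domain_axiom pseries.
Proof.
move=> f g fg0.
case: (pselect (exists n, pcoef f n != 0)) => [Hf|Hf]; last first.
  apply/orP; left; apply/eqP; apply: ps_coef_eq0 => n.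
  by apply/eqP/negPn/negP => H; apply: Hf; exists n.
case: (pselect (exists n, pcoef g n != 0)) => [Hg|Hg]; last first.
  apply/orP; right; apply/eqP; apply: ps_coef_eq0 => n.
  by apply/eqP/negPn/negP => H; apply: Hg; exists n.
exfalso.
have [i [fi fmin]] : exists i, pcoef f i != 0 /\ forall a, (a < i)%N -> pcoef f a = 0.
  case: (ex_minnP Hf) => m Hm Hmin; exists m; split => // a Ha.
  by apply/eqP/negPn/negP => /Hmin; rewrite leqNgt Ha.
have [j [gj gmin]] : exists j, pcoef g j != 0 /\ forall a, (a < j)%N -> pcoef g a = 0.
  case: (ex_minnP Hg) => m Hm Hmin; exists m; split => // a Ha.
  by apply/eqP/negPn/negP => /Hmin; rewrite leqNgt Ha.
have := congr1 (fun h => pcoef h (i + j)) fg0.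
change (pcoef (ps_mul f g) (i + j) = 0 -> False).
have Hi : (i < (i + j).+1)%N by rewrite ltnS leq_addr.
rewrite ps_mulE (bigD1 (Ordinal Hi)) //= big1 ?addr0.
  by rewrite addKn => /eqP; rewrite mulf_eq0 (negPf fi) (negPf gj).
move=> k /eqP Hk; case: (ltngtP k i) => Hki.
- by rewrite fmin // mul0r.
- rewrite gmin ?mulr0 //; move: (ltn_ord k) Hki.
  by case: k {Hk} => k /= _; lia.
- by exfalso; apply: Hk; apply: val_inj.
Qed.

HB.instance Definition _ := GRing.ComUnitRing_isIntegral.Build pseries ps_integral.

End PowerSeries.

Definition ps_X (R : idomainType) : pseries R := PSeries (fun n => (n == 1%N)%:R).

(* The field of formal Laurent series R((u)), realized as the field of
   fractions of the power series ring R[[u]]. *)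
Notation laurent R := {fraction pseries R}.

(* The ordering of R((u)): a Laurent series is positive iff it is nonzero and
   its lowest-exponent nonzero coefficient is positive.  For x = p/q with p, q
   power series whose lowest nonzero coefficients are p_i and q_j, the lowest
   nonzero coefficient of x is p_i / q_j, whose sign is that of p_i * q_j. *)
Definition laurent_pos (R : realDomainType) (x : laurent R) : Prop :=
  exists (p q : pseries R) (i j : nat),
    x = FracField.tofrac p / FracField.tofrac q /\
    (forall a, (a < i)%N -> pcoef p a = 0) /\
    (forall b, (b < j)%N -> pcoef q b = 0) /\
    0 < pcoef p i * pcoef q j.

(* A braid word: a list of letters (i, true) = sigma_i, (i, false) = sigma_i^-1.
   Every element of B_N is represented by such a word. *)
Definition braid_word (N : nat) (w : seq (nat * bool)) : bool :=
  all (fun a => (0 < a.1 < N)%N) w.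

(* Reduced Burau matrix of sigma_i in B_N (size N-1), with t in a commutative
   ring F. Using 1-based indices r, c in [1, N-1] it is the identity except in
   column i, where the entries are  t (row i-1),  -t (row i),  1 (row i+1)
   (rows outside [1, N-1] being absent).  This matches the block matrices of
   the paper for sigma_1, sigma_(N-1), sigma_i (2 <= i <= N-2), and N = 2.
   Below j, k are the 0-based row/column indices (r = j+1, c = k+1). *)
Definition burau_gen (F : comUnitRingType) (t : F) (N i : nat) : 'M[F]_(N.-1) :=
  \matrix_(j, k)
    if (k.+1 == i)%N then
      (if (j.+2 == i)%N then t
       else if (j.+1 == i)%N then - t
       else if (nat_of_ord j == i)%N then 1 else 0)
    else (j == k)%:R.

Definition burau_letter (F : comUnitRingType) (t : F) (N : nat) (a : nat * bool)
  : 'M[F]_(N.-1) :=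
  if a.2 then burau_gen t N a.1 else invmx (burau_gen t N a.1).

Definition burau (F : comUnitRingType) (t : F) (N : nat) (w : seq (nat * bool))
  : 'M[F]_(N.-1) :=
  foldr (fun a M => burau_letter t N a *m M) 1%:M w.

(* underlying permutation: sigma_i |-> transposition (i i+1) of {1..N},
   i.e. of the 0-based points i-1 and i of 'I_N. *)
Definition letter_perm (N : nat) (a : nat * bool) : 'S_N :=
  match insub a.1.-1, insub a.1 with
  | Some x, Some y => tperm x y
  | _, _ => 1%g
  end.

Definition braid_perm (N : nat) (w : seq (nat * bool)) : 'S_N :=
  foldr (fun a s => (letter_perm N a * s)%g) 1%g w.

(* beta has positive Burau eigenvalues: all eigenvalues of rho(beta) lie in
   E = U_k R((t^(1/k))) and are positive.  R((t^(1/k))) is identified with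
   R((u)) via t = u^k; since the eigenvalues are finitely many and the
   R((t^(1/k))) form a directed union, they all lie in E iff they all lie in
   a single R((t^(1/k))).  "All eigenvalues lie in the field" means the
   characteristic polynomial splits into linear factors over it. *)
Definition positive_Burau_eigenvalues (R : realType) (N : nat)
  (w : seq (nat * bool)) : Prop :=
  exists k : nat, (0 < k)%N /\
    exists s : seq (laurent R),
      char_poly (burau (FracField.tofrac (ps_X R) ^+ k) N w) = \prod_(x <- s) ('X - x%:P) /\
      (forall x, x \in s -> laurent_pos x).

From HB Require Import structures.
From mathcomp Require Import all_boot all_order all_algebra all_fingroup.
From mathcomp Require Import boolp reals.
From mathcomp Require Import zify ring.
Set Implicit Arguments. Unset Strict Implicit. Unset Printing Implicit Defensive.
Import Order.TTheory GRing.Theory Num.Theory.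
Local Open Scope ring_scope.

(* The reduced Burau matrix of every generator sigma_i has determinant -t, so
   det rho(beta) = (-1)^l * t^e where l is the length of a word for beta.
   A 2n-cycle is an odd permutation, hence l is odd and the determinant is the
   negative of a positive element of E.  But if the characteristic polynomial
   splits with positive roots, the determinant is their product, which is
   positive. *)

Lemma pcoefM_lowest (R : idomainType) (f g : pseries R) (i j : nat) :
  (forall a, (a < i)%N -> pcoef f a = 0) ->
  (forall b, (b < j)%N -> pcoef g b = 0) ->
  pcoef (f * g) (i + j) = pcoef f i * pcoef g j.
Proof.
move=> f_low g_low; change (pcoef (ps_mul f g) (i + j) = pcoef f i * pcoef g j).
have i_lt : (i < (i + j).+1)%N by lia.
rewrite ps_mulE (bigD1 (Ordinal i_lt)) //= addKn big1 ?addr0 // => k /eqP k_neq.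
case: (ltngtP k i) => [k_lt|k_gt|k_eq]; first by rewrite f_low ?mul0r.
  by rewrite g_low ?mulr0 //; have := ltn_ord k; lia.
by case: k_neq; apply: val_inj.
Qed.

Lemma pcoefM_below (R : idomainType) (f g : pseries R) (i j : nat) :
  (forall a, (a < i)%N -> pcoef f a = 0) ->
  (forall b, (b < j)%N -> pcoef g b = 0) ->
  forall c, (c < i + j)%N -> pcoef (f * g) c = 0.
Proof.
move=> f_low g_low c c_lt; change (pcoef (ps_mul f g) c = 0); rewrite ps_mulE.
apply: big1 => k _; case: (ltnP k i) => k_i; first by rewrite f_low ?mul0r.
by rewrite g_low ?mulr0 //; have := ltn_ord k; lia.
Qed.

Section LaurentPositivity.
Variable R : realDomainType.
Notation tf := (@FracField.tofrac (pseries R)).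

Lemma laurent_posM (x y : laurent R) :
  laurent_pos x -> laurent_pos y -> laurent_pos (x * y).
Proof.
move=> [p [q [i [j [-> [p_low [q_low pq_gt0]]]]]]].
move=> [p' [q' [i' [j' [-> [p'_low [q'_low pq'_gt0]]]]]]].
exists (p * p'), (q * q'), (i + i')%N, (j + j')%N.
split; first by rewrite mulf_div !tofracM.
split; first exact: pcoefM_below.
split; first exact: pcoefM_below.
rewrite !pcoefM_lowest //; have := mulr_gt0 pq_gt0 pq'_gt0.
by congr (0 < _); ring.
Qed.

Lemma laurent_posV (x : laurent R) : laurent_pos x -> laurent_pos x^-1.
Proof.
move=> [p [q [i [j [-> [p_low [q_low pq_gt0]]]]]]].
exists q, p, j, i; split; first by rewrite invf_div.
by rewrite mulrC.
Qed.

Lemma laurent_pos1 : laurent_pos (1 : laurent R).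
Proof. by exists 1, 1, 0%N, 0%N; rewrite tofrac1 divr1 /= mulr1 ltr01. Qed.

Lemma laurent_pos_u : laurent_pos (tf (ps_X R)).
Proof.
exists (ps_X R), 1, 1%N, 0%N; split; first by rewrite tofrac1 divr1.
by split=> [[]|]; rewrite //= mulr1 ltr01.
Qed.

Lemma laurent_posX (x : laurent R) k : laurent_pos x -> laurent_pos (x ^+ k).
Proof.
move=> x_pos; elim: k => [|k IH]; first exact: laurent_pos1.
by rewrite exprS; apply: laurent_posM.
Qed.

Lemma laurent_pos_prod (I : eqType) (r : seq I) (F : I -> laurent R) :
  (forall i, i \in r -> laurent_pos (F i)) -> laurent_pos (\prod_(i <- r) F i).
Proof.
move=> F_pos; rewrite big_seq.
by elim/big_ind: _ => //; [exact: laurent_pos1 | exact: laurent_posM].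
Qed.

Lemma laurent_pos_neq0 (x : laurent R) : laurent_pos x -> x != 0.
Proof.
move=> [p [q [i [j [-> [_ [_ pq_gt0]]]]]]].
rewrite mulf_eq0 invr_eq0 !tofrac_eq0; apply: contraTN pq_gt0.
by case/orP=> /eqP->; rewrite /= ?mul0r ?mulr0 ltxx.
Qed.

Lemma laurent_posN1 : ~ laurent_pos (-1 : laurent R).
Proof.
move=> [p [q [i [j [E [p_low [q_low pq_gt0]]]]]]].
have := lt0r_neq0 pq_gt0; rewrite mulf_eq0 negb_or => /andP[pi_neq0 qj_neq0].
have q_neq0 : tf q != 0 by rewrite tofrac_eq0; apply: contraNneq qj_neq0 => ->.
have p_opp : p = - q.
  by apply/eqP; rewrite -tofrac_eq tofracN -(divfK q_neq0 (tf p)) -E mulN1r.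
have pcoef_opp a : pcoef p a = - pcoef q a by rewrite p_opp.
have i_eq_j : i = j.
  case: (ltngtP i j) => // [i_lt|j_lt].
    by move: pi_neq0; rewrite pcoef_opp q_low ?oppr0 ?eqxx.
  by move: qj_neq0; rewrite -oppr_eq0 -pcoef_opp p_low ?eqxx.
move: pq_gt0; rewrite pcoef_opp i_eq_j mulNr oppr_gt0 -expr2.
by rewrite ltNge sqr_ge0.
Qed.

Lemma laurent_posN (x : laurent R) : laurent_pos x -> ~ laurent_pos (- x).
Proof.
move=> x_pos Nx_pos; apply: laurent_posN1.
rewrite -(divff (laurent_pos_neq0 x_pos)) -mulNr.
by apply: laurent_posM => //; apply: laurent_posV.
Qed.

End LaurentPositivity.

Lemma det_burau_gen (F : comUnitRingType) (t : F) (N i : nat) :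
  (0 < i < N)%N -> \det (burau_gen t N i) = - t.
Proof.
move=> /andP[i_gt0 i_lt]; have c_lt : (i.-1 < N.-1)%N by lia.
pose c := Ordinal c_lt.
have row_c k : burau_gen t N i c k = if k == c then - t else 0.
  rewrite mxE /=; case: eqP => [k_eq|k_neq].
    have -> : k == c by apply/eqP/val_inj => /=; lia.
    by rewrite ifF ?ifT //; apply/eqP; lia.
  have /negPf k_neq_c : k != c by apply/eqP => k_c; apply: k_neq; rewrite k_c /=; lia.
  by rewrite eq_sym k_neq_c.
rewrite (expand_det_row _ c) (bigD1 c) //= big1 ?addr0 => [|k /negPf k_neq]; last first.
  by rewrite row_c k_neq mul0r.
rewrite row_c eqxx /cofactor addnn -signr_odd odd_double expr0 mul1r.
suff -> : row' c (col' c (burau_gen t N i)) = 1%:M by rewrite det1 mulr1.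
apply/matrixP => a b; rewrite !mxE ifF ?(inj_eq lift_inj) //.
apply/eqP => b_i; have /eqP[] := neq_lift c b.
by apply: ord_inj; move: b_i => /=; lia.
Qed.

Lemma det_burau (F : comUnitRingType) (t : F) (N : nat) (w : seq (nat * bool)) :
  braid_word N w ->
  \det (burau t N w) = (-1) ^+ size w * \prod_(a <- w) (if a.2 then t else t^-1).
Proof.
elim: w => [|a w IH] /=; first by rewrite det1 big_nil mulr1.
move=> /andP[a_ok w_ok]; rewrite det_mulmx IH // big_cons exprS /burau_letter.
case: a.2; rewrite ?det_inv det_burau_gen // ?invrN; ring.
Qed.

Lemma odd_braid_perm (N : nat) (w : seq (nat * bool)) :
  braid_word N w -> odd_perm (braid_perm N w) = odd (size w).
Proof.
elim: w => [|a w IH] /=; first by rewrite odd_perm1.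
move=> /andP[/andP[a_gt0 a_lt] w_ok]; rewrite /letter_perm.
case: insubP => [x _ x_val|]; last by lia.
case: insubP => [y _ y_val|]; last by lia.
have x_neq_y : x != y by apply/eqP => x_y; move: x_val; rewrite x_y y_val; lia.
by rewrite odd_mul_tperm x_neq_y IH.
Qed.

Lemma odd_perm_one_cycle (T : finType) (s : {perm T}) :
  #|porbits s| = 1%N -> odd_perm s = ~~ odd #|T|.
Proof. by rewrite /odd_perm => ->; rewrite addbT. Qed.

Lemma prodrN_seq (F : comNzRingType) (s : seq F) :
  \prod_(x <- s) - x = (-1) ^+ size s * \prod_(x <- s) x.
Proof.
elim: s => [|x s IH]; first by rewrite !big_nil mulr1.
by rewrite !big_cons IH exprS /=; ring.
Qed.

Lemma det_eq_prod_roots (F : comNzRingType) (n : nat) (A : 'M[F]_n) (s : seq F) :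
  char_poly A = \prod_(x <- s) ('X - x%:P) -> \det A = \prod_(x <- s) x.
Proof.
move=> charA; have size_s : size s = n.
  by have := size_char_poly A; rewrite charA size_prod_XsubC => -[].
have := char_poly_det A; rewrite charA -horner_coef0 horner_prod.
under eq_bigr do rewrite hornerXsubC sub0r.
by rewrite prodrN_seq size_s => /(congr1 ( *%R ((-1) ^+ n))); rewrite !signrMK.
Qed.

Theorem mainTheorem14 (R : realType) (n : nat) (w : seq (nat * bool)) :
  (1 <= n)%N ->
  braid_word (2 * n) w ->
  #|porbits (braid_perm (2 * n) w)| = 1%N ->
  ~ positive_Burau_eigenvalues R (2 * n) w.
Proof.
move=> _ w_ok one_cycle [k [_ [s [charA s_pos]]]].
set t := FracField.tofrac (ps_X R) ^+ k in charA.
have t_pos : laurent_pos t by apply/laurent_posX/laurent_pos_u.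
have odd_w : odd (size w).
  by rewrite -(odd_braid_perm w_ok) odd_perm_one_cycle // card_ord oddM.
have := det_eq_prod_roots charA.
rewrite det_burau // -signr_odd odd_w mulN1r => detA.
apply: (laurent_posN (x := \prod_(a <- w) (if a.2 then t else t^-1))).
  by apply: laurent_pos_prod => a _; case: a.2; last apply: laurent_posV.
by rewrite detA; apply: laurent_pos_prod.
Qed.
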